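(* Fix $a,b,\kappa>0$ and let $p(s)=a+bs$. For $\alpha>0$ set $p_1=\frac{\kappa}{1+\alpha}p$ and $p_2=\alpha p_1$ (i.e. $a_1=\frac{\kappa a}{1+\alpha}$, $b_1=\frac{\kappa b}{1+\alpha}$, $a_2=\alpha a_1$, $b_2=\alpha b_1$). Then there exists $\bar\alpha>0$ such that for every $\alpha>\bar\alpha$, the function $C_1$ defined in the context satisfies $\sup_{\omega\ge0}|C_1(j\omega)|<1$. (Indeed $\sup_\omega|C_1(j\omega)|\to 0$ as $\alpha\to\infty$.)
   Context: For constants $a_1,b_1,a_2,b_2>0$ and complex $s$, set $p_1(s)=a_1+b_1 s$, $p_2(s)=a_2+b_2 s$, $q=p_1+p_2$, and $m(s)=(s^2+q)\sqrt{1-\frac{4p_1p_2}{(s^2+q)^2}}$ with $\sqrt{\cdot}$ the principal complex square root (nonnegative real part), so $m^2=(s^2+q)^2-4p_1p_2$. Define $C_1=\frac{(s^2+q)-m}{2p_2}$. $j$ denotes the imaginary unit. *)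

From Stdlib Require Import Reals.
Open Scope R_scope.

Definition Cx : Type := (R * R)%type.

Definition RtoC (r : R) : Cx := (r, 0).
Definition Cj : Cx := (0, 1).
Definition Cadd (z w : Cx) : Cx := (fst z + fst w, snd z + snd w).
Definition Csub (z w : Cx) : Cx := (fst z - fst w, snd z - snd w).
Definition Cmul (z w : Cx) : Cx :=
  (fst z * fst w - snd z * snd w, fst z * snd w + snd z * fst w).
Definition Cinv (z : Cx) : Cx :=
  let d := fst z * fst z + snd z * snd z in (fst z / d, - snd z / d).
Definition Cdiv (z w : Cx) : Cx := Cmul z (Cinv w).
Definition Cnorm (z : Cx) : R := sqrt (fst z * fst z + snd z * snd z).
(* principal square root: the root with nonnegative real part
   (and nonnegative imaginary part when the real part is 0) *)
Definition Csqrt (z : Cx) : Cx :=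
  let r := Cnorm z in
  (sqrt ((r + fst z) / 2),
   if Rle_dec 0 (snd z) then sqrt ((r - fst z) / 2)
   else - sqrt ((r - fst z) / 2)).

Definition C1_ctrl (a1 b1 a2 b2 : R) (s : Cx) : Cx :=
  let p1 := Cadd (RtoC a1) (Cmul (RtoC b1) s) in
  let p2 := Cadd (RtoC a2) (Cmul (RtoC b2) s) in
  let q := Cadd p1 p2 in
  let u := Cadd (Cmul s s) q in
  let m := Cmul u (Csqrt (Csub (RtoC 1)
                     (Cdiv (Cmul (RtoC 4) (Cmul p1 p2)) (Cmul u u)))) in
  Cdiv (Csub u m) (Cmul (RtoC 2) p2).

(* Write p1 = λ p and p2 = μ p with λ + μ = κ, so that u := s^2 + q = s^2 + κ p.
   With e := 4 p1 p2 / u^2 and t the principal root of 1 - e we have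
   (1 - t)(1 + t) = e and |1 + t| >= 1 since Re t >= 0, hence |1 - t| <= |e| and
   |C1| = |u| |1 - t| / (2 |p2|) <= 2 |p1| / |u| = 2 λ |p| / |u|.
   On the imaginary axis |p(jω)| / |u(jω)| is bounded uniformly in ω and
   independently of α, while λ = κ / (1 + α) tends to 0. *)
From Stdlib Require Import Reals Lra Psatz.
Open Scope R_scope.

Lemma Cnorm_ge0 z : 0 <= Cnorm z.
Proof. apply sqrt_pos. Qed.

Lemma Cnorm_RtoC r : 0 <= r -> Cnorm (RtoC r) = r.
Proof.
  intro Hr. unfold Cnorm, RtoC; simpl.
  replace (r * r + 0 * 0) with (r * r) by ring. now apply sqrt_square.
Qed.

Lemma Cnorm_mul z w : Cnorm (Cmul z w) = Cnorm z * Cnorm w.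
Proof.
  destruct z as [x y], w as [x' y']. unfold Cnorm, Cmul; simpl.
  rewrite <- sqrt_mult by nra. f_equal. ring.
Qed.

Lemma Cnorm_inv z : 0 < Cnorm z -> Cnorm (Cinv z) = / Cnorm z.
Proof.
  destruct z as [x y]. unfold Cnorm, Cinv; simpl. intro Hz.
  assert (Hd : 0 < x * x + y * y).
  { destruct (Rle_lt_dec (x * x + y * y) 0) as [Hle | Hlt]; auto.
    replace (x * x + y * y) with 0 in Hz by nra. rewrite sqrt_0 in Hz. lra. }
  rewrite <- sqrt_inv. f_equal. field. lra.
Qed.

Lemma Cnorm_div z w : 0 < Cnorm w -> Cnorm (Cdiv z w) = Cnorm z / Cnorm w.
Proof. intro Hw. unfold Cdiv. now rewrite Cnorm_mul, Cnorm_inv. Qed.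

Lemma Csqrt_spec w : Cmul (Csqrt w) (Csqrt w) = w /\ 0 <= fst (Csqrt w).
Proof.
  destruct w as [x y]. unfold Csqrt, Cmul, Cnorm; simpl.
  set (r := sqrt (x * x + y * y)).
  assert (Hr0 : 0 <= r) by apply sqrt_pos.
  assert (Hr2 : r * r = x * x + y * y) by (apply sqrt_sqrt; nra).
  assert (Hre : 0 <= (r + x) / 2) by nra.
  assert (Him : 0 <= (r - x) / 2) by nra.
  pose proof (sqrt_sqrt _ Hre) as Hre2. pose proof (sqrt_sqrt _ Him) as Him2.
  assert (Hprod : sqrt ((r + x) / 2) * sqrt ((r - x) / 2) = Rabs y / 2).
  { rewrite <- sqrt_mult by auto.
    replace ((r + x) / 2 * ((r - x) / 2)) with (Rabs y / 2 * (Rabs y / 2)).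
    - apply sqrt_square. pose proof (Rabs_pos y). lra.
    - assert (Rabs y * Rabs y = y * y) by (rewrite <- Rabs_mult; apply Rabs_right; nra).
      nra. }
  split; [| apply sqrt_pos].
  destruct (Rle_dec 0 y).
  - rewrite Rabs_right in Hprod by lra. f_equal; nra.
  - rewrite Rabs_left in Hprod by lra. f_equal; nra.
Qed.

Lemma Cnorm_1_sub_Csqrt_1_sub e :
  Cnorm (Csub (RtoC 1) (Csqrt (Csub (RtoC 1) e))) <= Cnorm e.
Proof.
  destruct (Csqrt_spec (Csub (RtoC 1) e)) as [Hsq Hre].
  set (t := Csqrt (Csub (RtoC 1) e)) in *.
  assert (Hfactor : Cmul (Csub (RtoC 1) t) (Cadd (RtoC 1) t) = e).
  { destruct t as [tx ty], e as [ex ey]. unfold Cmul, Csub, Cadd, RtoC in *; simpl in *.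
    pose proof (f_equal fst Hsq) as H1. pose proof (f_equal snd Hsq) as H2.
    simpl in H1, H2. f_equal; nra. }
  assert (H1t : 1 <= Cnorm (Cadd (RtoC 1) t)).
  { destruct t as [tx ty]; unfold Cnorm, Cadd, RtoC; simpl in *.
    rewrite <- sqrt_1 at 1. apply sqrt_le_1_alt. nra. }
  rewrite <- Hfactor, Cnorm_mul. pose proof (Cnorm_ge0 (Csub (RtoC 1) t)). nra.
Qed.

Definition lin (a b : R) (s : Cx) : Cx := Cadd (RtoC a) (Cmul (RtoC b) s).

Lemma lin_add a1 b1 a2 b2 s :
  Cadd (lin a1 b1 s) (lin a2 b2 s) = lin (a1 + a2) (b1 + b2) s.
Proof. destruct s. unfold lin, Cadd, Cmul, RtoC; simpl; f_equal; ring. Qed.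

Lemma lin_scale a b l s : lin (a * l) (b * l) s = Cmul (RtoC l) (lin a b s).
Proof. destruct s. unfold lin, Cadd, Cmul, RtoC; simpl; f_equal; ring. Qed.

Lemma C1_ctrl_norm_le a1 b1 a2 b2 a b s :
  a1 + a2 = a -> b1 + b2 = b ->
  0 < Cnorm (Cadd (Cmul s s) (lin a b s)) -> 0 < Cnorm (lin a2 b2 s) ->
  Cnorm (C1_ctrl a1 b1 a2 b2 s) <=
    2 * Cnorm (lin a1 b1 s) / Cnorm (Cadd (Cmul s s) (lin a b s)).
Proof.
  intros Ha Hb. unfold C1_ctrl; cbv zeta.
  change (Cadd (RtoC a1) (Cmul (RtoC b1) s)) with (lin a1 b1 s).
  change (Cadd (RtoC a2) (Cmul (RtoC b2) s)) with (lin a2 b2 s).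
  rewrite lin_add, Ha, Hb.
  set (p1 := lin a1 b1 s). set (p2 := lin a2 b2 s).
  set (u := Cadd (Cmul s s) (lin a b s)). intros Hu Hp2.
  set (e := Cdiv (Cmul (RtoC 4) (Cmul p1 p2)) (Cmul u u)).
  set (t := Csqrt (Csub (RtoC 1) e)).
  assert (Hfactor : Csub u (Cmul u t) = Cmul u (Csub (RtoC 1) t)).
  { destruct u, t; unfold Csub, Cmul, RtoC; simpl; f_equal; ring. }
  assert (Hnorm_e : Cnorm e = 4 * (Cnorm p1 * Cnorm p2) / (Cnorm u * Cnorm u)).
  { unfold e. rewrite Cnorm_div, !Cnorm_mul, Cnorm_RtoC; [reflexivity | lra |].
    rewrite Cnorm_mul. nra. }
  pose proof (Cnorm_1_sub_Csqrt_1_sub e) as Ht. fold t in Ht. rewrite Hnorm_e in Ht.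
  rewrite Hfactor, Cnorm_div, !Cnorm_mul, Cnorm_RtoC by (try rewrite Cnorm_mul, Cnorm_RtoC; lra).
  pose proof (Cnorm_ge0 p1).
  apply Rle_trans with (Cnorm u * (4 * (Cnorm p1 * Cnorm p2) / (Cnorm u * Cnorm u)) / (2 * Cnorm p2)).
  - apply Rmult_le_compat_r.
    + apply Rlt_le, Rinv_0_lt_compat. lra.
    + apply Rmult_le_compat_l; lra.
  - right. field. lra.
Qed.

Notation jw w := (Cmul Cj (RtoC w)).

Lemma Cnorm_lin_jw a b w : Cnorm (lin a b (jw w)) = sqrt (a * a + (b * w) * (b * w)).
Proof. unfold Cnorm. f_equal. simpl. ring. Qed.

Lemma Cnorm_lin_jw_gt0 a b w : 0 < a -> 0 < Cnorm (lin a b (jw w)).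
Proof. intro Ha. rewrite Cnorm_lin_jw. apply sqrt_lt_R0. nra. Qed.

Lemma Cnorm_jw_sq_add_lin a b w :
  Cnorm (Cadd (Cmul (jw w) (jw w)) (lin a b (jw w))) =
  sqrt ((a - w * w) * (a - w * w) + (b * w) * (b * w)).
Proof. unfold Cnorm. f_equal. simpl. ring. Qed.

(* For ω^2 <= a/2 the term (a - ω^2)^2 controls a^2; for ω^2 >= a/2 the
   damping term (b ω)^2 does. *)
Lemma affine_sq_le_quadratic_sq a b : 0 < a -> 0 < b ->
  exists K, 0 < K /\ forall w,
    a * a + (b * w) * (b * w) <= K * ((a - w * w) * (a - w * w) + (b * w) * (b * w)).
Proof.
  intros Ha Hb. set (c := 2 * a / (b * b)). exists (5 + c).
  assert (Hc : 0 < c) by (apply Rdiv_lt_0_compat; nra).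
  split; [lra |]. intro w.
  set (x := (a - w * w) * (a - w * w)). set (y := (b * w) * (b * w)).
  assert (Hx : 0 <= x) by apply Rle_0_sqr.
  assert (Hy : 0 <= y) by apply Rle_0_sqr.
  assert (Hres : a * a <= 4 * x + c * y).
  { destruct (Rle_dec (w * w) (a / 2)).
    - assert (a * a <= 4 * x) by (unfold x; nra).
      assert (0 <= c * y) by (apply Rmult_le_pos; lra).
      lra.
    - assert (Hdamp : c * y = 2 * a * (w * w))
        by (unfold c, y; field; apply Rgt_not_eq; lra).
      nra. }
  assert (0 <= c * x) by (apply Rmult_le_pos; lra).
  replace ((5 + c) * (x + y)) with (4 * x + c * y + (c * x + x + 5 * y)) by ring.
  lra.
Qed.

Lemma Cnorm_lin_jw_le_sq_add_lin a b : 0 < a -> 0 < b ->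
  exists M, 0 < M /\ forall w,
    Cnorm (lin a b (jw w)) <= M * Cnorm (Cadd (Cmul (jw w) (jw w)) (lin a b (jw w))).
Proof.
  intros Ha Hb. destruct (affine_sq_le_quadratic_sq a b Ha Hb) as [K [HK HKw]].
  exists (sqrt K). split; [now apply sqrt_lt_R0 |]. intro w.
  rewrite Cnorm_lin_jw, Cnorm_jw_sq_add_lin, <- sqrt_mult.
  - apply sqrt_le_1_alt, HKw.
  - lra.
  - apply Rplus_le_le_0_compat; apply Rle_0_sqr.
Qed.

Lemma C1_ctrl_family_jw_le a b kappa alpha M omega :
  0 < a -> 0 < b -> 0 < kappa -> 0 < alpha ->
  Cnorm (lin (kappa * a) (kappa * b) (jw omega)) <=
    M * Cnorm (Cadd (Cmul (jw omega) (jw omega)) (lin (kappa * a) (kappa * b) (jw omega))) ->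
  Cnorm (C1_ctrl (kappa * a / (1 + alpha)) (kappa * b / (1 + alpha))
                 (alpha * (kappa * a / (1 + alpha))) (alpha * (kappa * b / (1 + alpha)))
                 (jw omega)) <= 2 * M / (1 + alpha).
Proof.
  intros Ha Hb Hk Halpha Hratio.
  set (u := Cadd (Cmul (jw omega) (jw omega)) (lin (kappa * a) (kappa * b) (jw omega))).
  fold u in Hratio.
  assert (Hp : 0 < Cnorm (lin (kappa * a) (kappa * b) (jw omega)))
    by (apply Cnorm_lin_jw_gt0; nra).
  assert (Hu : 0 < Cnorm u).
  { destruct (Rle_lt_dec (Cnorm u) 0); [| assumption].
    assert (Hu0 : Cnorm u = 0) by (pose proof (Cnorm_ge0 u); lra).
    rewrite Hu0, Rmult_0_r in Hratio. lra. }
  set (l := / (1 + alpha)).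
  assert (Hl : 0 < l) by (apply Rinv_0_lt_compat; lra).
  eapply Rle_trans; [apply C1_ctrl_norm_le with (a := kappa * a) (b := kappa * b) |].
  - field. lra.
  - field. lra.
  - exact Hu.
  - apply Cnorm_lin_jw_gt0. unfold Rdiv. fold l.
    apply Rmult_lt_0_compat; [lra |]. apply Rmult_lt_0_compat; nra.
  - fold u.
    change (kappa * a / (1 + alpha)) with (kappa * a * l).
    change (kappa * b / (1 + alpha)) with (kappa * b * l).
    rewrite lin_scale, Cnorm_mul, Cnorm_RtoC by lra.
    replace (2 * M / (1 + alpha)) with (2 * (l * (M * Cnorm u)) / Cnorm u)
      by (unfold l; field; lra).
    apply Rmult_le_compat_r; [apply Rlt_le, Rinv_0_lt_compat; exact Hu |].
    apply Rmult_le_compat_l; [lra |].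
    apply Rmult_le_compat_l; [lra | exact Hratio].
Qed.

Theorem lemma2 (a b kappa : R) (ha : 0 < a) (hb : 0 < b) (hk : 0 < kappa)   :
  (exists abar : R, 0 < abar /\
    forall alpha : R, abar < alpha ->
      exists c : R, c < 1 /\
        forall omega : R, 0 <= omega ->
          Cnorm (C1_ctrl (kappa * a / (1 + alpha)) (kappa * b / (1 + alpha))
                    (alpha * (kappa * a / (1 + alpha)))
                    (alpha * (kappa * b / (1 + alpha)))
                    (Cmul Cj (RtoC omega))) <= c)%R.
Proof.
  destruct (Cnorm_lin_jw_le_sq_add_lin (kappa * a) (kappa * b)) as [M [HM Hratio]].
  { nra. }
  { nra. }
  exists (4 * M). split; [lra |]. intros alpha Halpha.
  exists (1 / 2). split; [lra |]. intros omega _.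
  apply Rle_trans with (2 * M / (1 + alpha)).
  - apply C1_ctrl_family_jw_le; [assumption .. | lra | apply Hratio].
  - apply (Rmult_le_reg_r (1 + alpha)); [lra |].
    replace (2 * M / (1 + alpha) * (1 + alpha)) with (2 * M) by (field; lra).
    lra.
Qed.
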